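(* Let $N\geq4$, $z\in\mathbb{C}\setminus\{0\}$, and let $|X_N(z)\rangle=|1\rangle^{\otimes N}+z^{N-1}\sqrt N\,|W_N\rangle$, where $|W_N\rangle=\frac{1}{\sqrt N}\left(|10\cdots0\rangle+|010\cdots0\rangle+\cdots+|0\cdots01\rangle\right)$. Then $|X_N(z)\rangle=\frac{1}{N-1}\sum_{k=1}^{N-1}|x_k\rangle^{\otimes N}$ with $|x_k\rangle=|1\rangle+e^{2\pi i(k-1)/(N-1)}z|0\rangle$, and $D(X_N(z))=N-1$.
   Context: The one-qubit space is $\mathbb{C}^2$ with standard basis $\{|0\rangle,|1\rangle\}$; $\mathrm{Sym}_N\subset(\mathbb{C}^2)^{\otimes N}$ is the symmetric subspace. For a nonzero $|\psi\rangle\in\mathrm{Sym}_N$, the optimal bond dimension $D(\psi)$ is the minimal integer $D\geq1$ such that $|\psi\rangle=\sum_{k=1}^D|x_k\rangle^{\otimes N}$ for some (not necessarily normalized) vectors $|x_k\rangle\in\mathbb{C}^2$. *)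

(* Complex numbers are modelled by an arbitrary
   numClosedFieldType C (e.g. algC). *)
From HB Require Import structures.
From mathcomp Require Import all_boot all_order all_algebra.
Set Implicit Arguments. Unset Strict Implicit. Unset Printing Implicit Defensive.
Import Order.TTheory GRing.Theory Num.Theory.
Local Open Scope ring_scope.

(* A one-qubit vector: x false = coefficient of |0>, x true = coefficient of |1>. *)
Definition qubit (C : numClosedFieldType) := {ffun bool -> C}.

(* Basis labels of (C^2)^{⊗N}: bit strings s : 'I_N -> bool (true = |1>). *)
Definition bits (N : nat) := {ffun 'I_N -> bool}.

Definition nqubit (C : numClosedFieldType) (N : nat) := {ffun bits N -> C^o}.

Definition ket (C : numClosedFieldType) (N : nat) (s : bits N) : nqubit C N :=
  [ffun t => (t == s)%:R].

Definition tpow (C : numClosedFieldType) (N : nat) (x : qubit C) : nqubit C N :=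
  [ffun s : bits N => \prod_(i < N) x (s i)].

Definition sum_of_tpows (C : numClosedFieldType) (N : nat) (psi : nqubit C N)
  (D : nat) : Prop :=
  exists xs : 'I_D -> qubit C, psi = \sum_(k < D) tpow N (xs k).

Definition optimal_bond_dim (C : numClosedFieldType) (N : nat)
  (psi : nqubit C N) (D : nat) : Prop :=
  [/\ (1 <= D)%N, sum_of_tpows psi D &
      forall D', (1 <= D')%N -> sum_of_tpows psi D' -> (D <= D')%N].

Definition all_ones (C : numClosedFieldType) (N : nat) : nqubit C N :=
  ket C [ffun _ => true].

Definition W_state (C : numClosedFieldType) (N : nat) : nqubit C N :=
  (sqrtC (N%:R : C))^-1 *: \sum_(i < N) ket C [ffun j => j == i].

Definition X_state (C : numClosedFieldType) (N : nat) (z : C) : nqubit C N :=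
  all_ones C N + (z ^+ N.-1 * sqrtC (N%:R : C)) *: W_state C N.

(* e^{2 pi i / n}: the square of n.-root (-1) = e^{i pi / n}. *)
Definition omega (C : numClosedFieldType) (n : nat) : C := (n.-root (-1 : C)) ^+ 2.

(* |x_k> = |1> + e^{2 pi i (k-1)/(N-1)} z |0>, indexed here by k-1 = 0..N-2. *)
Definition x_vec (C : numClosedFieldType) (N : nat) (z : C) (k : nat) : qubit C :=
  [ffun b : bool => if b then 1 else omega C N.-1 ^+ k * z].

From HB Require Import structures.
From mathcomp Require Import all_boot all_order all_algebra.
From mathcomp Require Import separable cyclic cyclotomic.
From mathcomp Require Import zify ring.
Set Implicit Arguments. Unset Strict Implicit. Unset Printing Implicit Defensive.
Import Order.TTheory GRing.Theory Num.Theory.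
Local Open Scope ring_scope.

(* On a basis string with w ones, |x_k>^{⊗N} has coordinate (ω^k z)^(N-w); averaging
   over k keeps exactly the strings with N-1 | N-w, i.e. w = N and w = 1, once ω is
   known to be a primitive (N-1)-th root of unity.  Conversely, if
   X = Σ_{i<D} (a_i|1> + b_i|0>)^{⊗N}, the coordinate of X on a string with m zeros is
   f(m) = Σ_i a_i^(N-m) b_i^m.  This satisfies a linear recurrence of order D, vanishes
   for 0 < m < N-1 and f(N-1) = z^(N-1) <> 0, which forces D >= N-1. *)

Lemma closed_prim_root_exists (F : closedFieldType) n :
  (0 < n)%N -> n%:R != 0 :> F -> exists u : F, n.-primitive_root u.
Proof.
move=> n_gt0 n_neq0; have [r Dp] := closed_field_poly_normal ('X^n - 1 : {poly F}).
rewrite (monicP _) ?monicXnsubC // scale1r in Dp.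
have rn1 : all n.-unity_root r by apply/allP=> x; rewrite -root_prod_XsubC -Dp.
have sz_r : (n < (size r).+1)%N by rewrite -(size_prod_XsubC r id) -Dp size_XnsubC.
have [|u] := hasP (has_prim_root n_gt0 rn1 _ sz_r); last by exists u.
by rewrite -separable_prod_XsubC -Dp separable_Xn_sub_1.
Qed.

Lemma sum_prim_root_expr (R : idomainType) n (u : R) j :
  n.-primitive_root u -> \sum_(i < n) (u ^+ j) ^+ i = if (n %| j)%N then n%:R else 0.
Proof.
move=> u_prim; rewrite (prim_order_dvd u_prim); case: eqP => [->|/eqP uj_neq1].
  by rewrite (eq_bigr (fun _ => 1)) ?sumr_const ?card_ord // => i _; rewrite expr1n.
apply/eqP; rewrite -(mulrI_eq0 _ (lregP (x := u ^+ j - 1) _)) ?subr_eq0 //.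
by rewrite -subrX1 exprAC (prim_expr_order u_prim) expr1n subrr.
Qed.

Lemma sum_prim_root_geom (R : idomainType) n (u r : R) : n.-primitive_root u ->
  \sum_(i < n) \sum_(j < n) (r * u ^+ i) ^+ j = n%:R.
Proof.
move=> u_prim; have n_gt0 := prim_order_gt0 u_prim.
rewrite exchange_big /= (bigD1 (Ordinal n_gt0)) //= [X in _ + X]big1 => [|j j_neq0].
  by rewrite addr0 (eq_bigr (fun _ => 1)) ?sumr_const ?card_ord // => i _; rewrite expr0.
under eq_bigr do rewrite exprMn exprAC.
by rewrite -mulr_sumr sum_prim_root_expr // gtnNdvd ?mulr0 // lt0n.
Qed.

Lemma expsum_window_eq0 (R : comPzRingType) e a (w r : 'I_e -> R) :
  (forall m, (a <= m < a + e)%N -> \sum_i w i * r i ^+ m = 0) ->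
  \sum_i w i * r i ^+ (a + e) = 0.
Proof.
elim: e w r => [|e IHe] w r w_eq0; first by rewrite big_ord0.
pose r' i := r (widen_ord (leqnSn e) i).
pose w' i := w (widen_ord (leqnSn e) i) * (r' i - r ord_max).
have w'E m : \sum_i w' i * r' i ^+ m =
    \sum_i w i * r i ^+ m.+1 - r ord_max * \sum_i w i * r i ^+ m.
  rewrite !big_ord_recr /= mulrDr mulr_sumr exprS.
  suff -> : \sum_i w' i * r' i ^+ m =
      \sum_i w (widen_ord (leqnSn e) i) * r' i ^+ m.+1 -
      \sum_i r ord_max * (w (widen_ord (leqnSn e) i) * r' i ^+ m) by ring.
  by rewrite -sumrB; apply: eq_bigr => i _; rewrite /w' exprS; ring.
have w'_eq0 m : (a <= m < a + e)%N -> \sum_i w' i * r' i ^+ m = 0.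
  by move=> am; rewrite w'E !w_eq0 ?mulr0 ?subr0 //; lia.
have := IHe w' r' w'_eq0; rewrite w'E (w_eq0 (a + e)%N) ?mulr0 ?subr0 ?addnS //; lia.
Qed.

Lemma expr_mul_div (F : fieldType) (p q : F) k m : (0 < k)%N ->
  p ^+ k * q ^+ m = p ^+ (k + m) * (q / p) ^+ m.
Proof.
move=> k_gt0; have [->|p_neq0] := eqVneq p 0.
  by rewrite !expr0n !gtn_eqF ?addn_gt0 ?k_gt0 // !mul0r.
by rewrite exprD exprMn exprVn mulrACA divff ?mulr1 // expf_neq0.
Qed.

Lemma dvdn_pred_sub N t : (2 < N)%N -> (t <= N)%N ->
  (N.-1 %| N - t)%N = (t == N) || (t == 1%N).
Proof.
case: N => // n n_gt1 t_le /=; have [->|t_neq0] := eqVneq t 0%N.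
  by rewrite subn0 -[n.+1]addn1 (dvdn_addr _ (dvdnn n)) dvdn1; lia.
have [->|t_neq1] := eqVneq t 1%N; first by rewrite subn1 dvdnn orbT.
have [->|t_lt] := eqVneq t n.+1; first by rewrite subnn dvdn0.
by rewrite gtnNdvd ?(negbTE t_lt) //; lia.
Qed.

Section UnitCircle.
Variable C : numClosedFieldType.
Implicit Types w x : C.

Lemma normC_subr1_sqr x : `|x| = 1 -> `|x - 1| ^+ 2 = 2 - 'Re x *+ 2.
Proof.
move=> x_norm1; have xx : x * x^* = 1 by rewrite -normCK x_norm1 expr1n.
have Re2 : 'Re x *+ 2 = x + x^* by rewrite ReE -mulr_natr divfK ?pnatr_eq0.
by rewrite normCK rmorphB rmorph1 Re2 mulrBl !mulrBr xx mulr1 mul1r; ring.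
Qed.

Lemma normC_expr_eq1 x n : (0 < n)%N -> `|x ^+ n| = 1 -> `|x| = 1.
Proof. by move=> n_gt0; rewrite normrX => /eqP; rewrite pexpr_eq1 // => /eqP. Qed.

(* The sums T_i = Σ_{j<g} s_i^j over the g-th roots s_i of w add up to g and satisfy
   (s_i - 1) T_i = w - 1, so some |T_i| > 1, i.e. s_i is closer to 1 than w is. *)
Lemma root_with_larger_Re w g :
  (1 < g)%N -> `|w| = 1 -> w != 1 -> exists s, s ^+ g = w /\ 'Re w < 'Re s.
Proof.
move=> g_gt1 w_norm1 w_neq1; have g_gt0 := ltnW g_gt1.
have [u u_prim] : exists u : C, g.-primitive_root u.
  by apply: closed_prim_root_exists; rewrite ?pnatr_eq0 -?lt0n.
set r := g.-root w; have r_root : r ^+ g = w by rewrite rootCK.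
pose s i := r * u ^+ i.
have s_root i : s i ^+ g = w.
  by rewrite exprMn r_root exprAC (prim_expr_order u_prim) expr1n mulr1.
pose T i := \sum_(j < g) s i ^+ j.
have T_sub1 i : (s i - 1) * T i = w - 1 by rewrite -subrX1 s_root.
have sum_T : \sum_(i < g) T i = \sum_(i < g) 1.
  by rewrite sumr_const card_ord sum_prim_root_geom.
have [i T_gt1 | T_le1] := pickP (fun i : 'I_g => 1 < `|T i|).
  exists (s i); split=> //.
  have s_neq1 : s i - 1 != 0.
    by apply: contraNneq w_neq1 => s1; rewrite -subr_eq0 -(T_sub1 i) s1 mul0r.
  have : `|s i - 1| < `|w - 1| by rewrite -(T_sub1 i) normrM ltr_pMr ?normr_gt0.
  have norm_s : `|s i| = 1 by apply: (normC_expr_eq1 g_gt0); rewrite s_root.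
  rewrite -(ltr_pXn2r (_ : 0 < 2)%N) ?nnegrE ?normr_ge0 // !normC_subr1_sqr //.
  by rewrite ltrD2l ltrN2 ltr_pMn2r.
have T_eq1 (i : 'I_g) : T i = 1.
  apply: (normC_sum_upper _ sum_T) => // j _.
  by have := T_le1 j; rewrite /= real_leNgt ?normr_real ?rpred1 // => ->.
have s_eqw (i : 'I_g) : s i = w.
  by have := T_sub1 i; rewrite T_eq1 mulr1 => /addIr.
have r_neq0 : r != 0.
  have w_neq0 : w != 0 by rewrite -normr_eq0 w_norm1 oner_neq0.
  by apply: contraNneq w_neq0 => r0; rewrite -r_root r0 expr0n gtn_eqF.
have u1 : u ^+ 1 == 1.
  have := s_eqw (Ordinal g_gt1); rewrite -(s_eqw (Ordinal g_gt0)) /s expr0 mulr1.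
  by rewrite -{2}[r]mulr1 => /(mulfI r_neq0) ->.
by move: u1; rewrite -(prim_order_dvd u_prim) dvdn1 gtn_eqF.
Qed.

(* n.-root (-1) has the largest real part among the n-th roots of -1 in the closed
   upper half-plane; if it were an m-th root of -1 for a proper divisor m of n, one of
   its (n/m)-th roots (or the conjugate) would contradict this. *)
Lemma omega_prim_root n : (0 < n)%N -> n.-primitive_root (omega C n).
Proof.
move=> n_gt0; set rho := n.-root (-1 : C).
have rho_root : rho ^+ n = -1 by rewrite rootCK.
have N1_neq1 : (-1 : C) != 1 by rewrite lt_eqF // (lt_trans (ltrN10 C) ltr01).
have [m m_prim m_dvd] : {m | m.-primitive_root (omega C n) & (m %| n)%N}.
  by apply: prim_order_exists; rewrite // -exprM mulnC exprM rho_root sqrrN expr1n.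
have [q n_def] := dvdnP m_dvd.
have [q_le1 | q_gt1] := leqP q 1.
  suff m_eq_n : m = n by move: m_prim; rewrite m_eq_n.
  by move: n_gt0; rewrite n_def; case: q {n_def} q_le1 => [|[|]] //; rewrite mul1n.
have /orP[/eqP rho_m1 | /eqP rho_m] : (rho ^+ m == 1) || (rho ^+ m == -1).
  by rewrite -sqrf_eq1 -exprM mulnC exprM (prim_expr_order m_prim).
  by move: N1_neq1; rewrite -rho_root n_def mulnC exprM rho_m1 expr1n eqxx.
have rho_norm1 : `|rho| = 1.
  by apply: (normC_expr_eq1 n_gt0); rewrite rho_root normrN1.
have rho_neq1 : rho != 1.
  by apply: contraNneq N1_neq1 => rho1; rewrite -rho_root rho1 expr1n.
have [s [s_root Re_lt]] := root_with_larger_Re q_gt1 rho_norm1 rho_neq1.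
have s_n : s ^+ n = -1 by rewrite n_def exprM s_root rho_m.
have [Im_ge0 | Im_lt0] := real_ge0P (Creal_Im s).
  by have := lt_le_trans Re_lt (rootC_Re_max n_gt0 s_n Im_ge0); rewrite ltxx.
have sc_n : s^* ^+ n = -1 by rewrite -rmorphXn s_n rmorphN1.
have Im_sc : 0 <= 'Im s^* by rewrite Im_conj oppr_ge0 ltW.
have := rootC_Re_max n_gt0 sc_n Im_sc; rewrite Re_conj => Re_le.
by have := lt_le_trans Re_lt Re_le; rewrite ltxx.
Qed.

End UnitCircle.

Definition weight N (s : bits N) : nat := #|[set i | s i]|.

Section Qubits.
Variable C : numClosedFieldType.
Implicit Types (N : nat) (z : C).

Lemma tpow_weight N (x : qubit C) (s : bits N) :
  tpow N x s = x true ^+ weight s * x false ^+ (N - weight s).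
Proof.
rewrite ffunE (bigID (fun i => s i)) /=.
rewrite (eq_bigr (fun _ => x true)) => [|i ->//].
rewrite [X in _ * X](eq_bigr (fun _ => x false)) => [|i /negbTE ->//].
rewrite !prodr_const /weight.
have := cardsC [set i | s i]; rewrite card_ord => N_def.
have -> : (N - #|[set i | s i]| = #|~: [set i | s i]|)%N by lia.
by congr (_ ^+ _ * _ ^+ _); apply: eq_card => i; rewrite !inE.
Qed.

Lemma exists_bits_weight N t : (t <= N)%N -> exists s : bits N, weight s = t.
Proof.
move=> t_le; exists [ffun i : 'I_N => (i < t)%N].
have widen_inj : injective (widen_ord t_le).
  by move=> i j /(congr1 val) ij; apply: val_inj.
rewrite /weight -[RHS](card_ord t) -cardsT -(card_imset _ widen_inj).
apply: eq_card => i; rewrite !inE ffunE.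
apply/idP/imsetP => [i_lt | [j _ ->]]; last exact: (ltn_ord j).
by exists (Ordinal i_lt) => //; apply: val_inj.
Qed.

Lemma tpowZ N c (x : qubit C) : tpow N [ffun b => c * x b] = c ^+ N *: tpow N x.
Proof.
apply/ffunP => s; rewrite !ffunE (eq_bigr (fun i => c * x (s i))) => [|i _]; last first.
  by rewrite ffunE.
by rewrite big_split /= prodr_const card_ord.
Qed.

Lemma weight_eqN N (s : bits N) : (weight s == N) = (s == [ffun=> true]).
Proof.
apply/eqP/eqP => [w_N | ->]; last first.
  by rewrite /weight -[RHS](card_ord N) -cardsT; apply: eq_card => i; rewrite !inE ffunE.
have /eqP s_T : [set i | s i] == setT.
  by rewrite eqEcard subsetT cardsT card_ord /= -/(weight s) w_N.
by apply/ffunP => i; move/setP: s_T => /(_ i); rewrite !inE ffunE.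
Qed.

Lemma sum_eq_unit_bits N (s : bits N) :
  \sum_(i < N) (s == [ffun j => j == i])%:R = (weight s == 1%N)%:R :> C.
Proof.
have unit_bitsE i : (s == [ffun j => j == i]) = ([set j | s j] == [set i]).
  apply/eqP/eqP => [-> | s_i]; first by apply/setP => j; rewrite !inE ffunE.
  by apply/ffunP => j; move/setP: s_i => /(_ j); rewrite !inE ffunE.
under eq_bigr do rewrite unit_bitsE.
have [/cards1P [i0 ->] | w_neq1] := boolP (weight s == 1%N).
  rewrite (bigD1 i0) //= eqxx big1 ?addr0 // => i i_neq.
  by rewrite eq_sym (inj_eq set1_inj) (negbTE i_neq).
by rewrite big1 // => i _; case: eqP => // s_i; move: w_neq1; rewrite /weight s_i cards1.
Qed.

Lemma X_state_weight N z (s : bits N) : (0 < N)%N ->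
  X_state N z s = (weight s == N)%:R + z ^+ N.-1 * (weight s == 1%N)%:R.
Proof.
move=> N_gt0; have sqrtN_neq0 : sqrtC (N%:R : C) != 0.
  by rewrite sqrtC_eq0 pnatr_eq0 -lt0n.
rewrite /X_state /W_state /all_ones /ket !ffunE sum_ffunE weight_eqN.
under eq_bigr do rewrite ffunE.
by rewrite sum_eq_unit_bits /GRing.scale /= mulrA mulfK.
Qed.

Lemma X_state_tpow_sum N z : (2 < N)%N ->
  X_state N z = (N.-1%:R)^-1 *: \sum_(k < N.-1) tpow N (x_vec N z k).
Proof.
move=> N_gt2; have n_gt0 : (0 < N.-1)%N by lia.
have om_prim := omega_prim_root C n_gt0.
have n_neq0 : N.-1%:R != 0 :> C by rewrite pnatr_eq0 -lt0n.
apply/ffunP => s; rewrite X_state_weight ?ffunE ?sum_ffunE ?(ltnW (ltnW N_gt2)) //.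
under eq_bigr do rewrite tpow_weight !ffunE expr1n mul1r exprMn -exprM mulnC exprM.
rewrite -mulr_suml sum_prim_root_expr // dvdn_pred_sub //; last first.
  by rewrite -[X in (_ <= X)%N](card_ord N) max_card.
rewrite /GRing.scale /=; have [-> | _] := eqVneq (weight s) N.
  by rewrite /= gtn_eqF ?(ltnW N_gt2) // subnn mulr0 addr0 mulr1 mulVf.
have [-> | _] := eqVneq (weight s) 1%N.
  by rewrite /= subn1 add0r mulr1 mulKf.
by rewrite /= mulr0 addr0 mul0r mulr0.
Qed.

Lemma X_state_sum_of_tpows N z : (2 < N)%N -> sum_of_tpows (X_state N z) N.-1.
Proof.
move=> N_gt2; pose c := N.-root (N.-1%:R^-1 : C).
exists (fun k => [ffun b => c * x_vec N z k b]).
rewrite [LHS]X_state_tpow_sum //; under [RHS]eq_bigr do rewrite tpowZ.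
by rewrite -scaler_sumr rootCK // (ltnW (ltnW N_gt2)).
Qed.

Lemma X_state_sum_of_tpows_ge N z D : (0 < N)%N -> z != 0 ->
  sum_of_tpows (X_state N z) D -> (N.-1 <= D)%N.
Proof.
move=> N_gt0 z_neq0 [xs X_def]; rewrite leqNgt; apply/negP => D_lt.
(* r i is junk when xs i true = 0, harmlessly so by expr_mul_div. *)
pose w i := xs i true ^+ N; pose r i := xs i false / xs i true.
have X_at m : (m < N)%N ->
    \sum_(i < D) w i * r i ^+ m = (m == 0%N)%:R + z ^+ N.-1 * (m == N.-1)%:R.
  move=> m_lt; have [s w_s] := exists_bits_weight (leq_subr m N).
  have -> : (m == 0%N) = (weight s == N) by rewrite w_s; apply/eqP/eqP; lia.
  have -> : (m == N.-1) = (weight s == 1%N) by rewrite w_s; apply/eqP/eqP; lia.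
  rewrite -X_state_weight // X_def sum_ffunE; apply: eq_bigr => i _.
  rewrite tpow_weight w_s subKn ?(ltnW m_lt) // [RHS]expr_mul_div ?subn_gt0 //.
  by rewrite subnK ?(ltnW m_lt).
have window_eq0 m : (N.-1 - D <= m < N.-1 - D + D)%N ->
    \sum_(i < D) w i * r i ^+ m = 0.
  move=> m_in; have [m_neq0 m_neqn] : m != 0%N /\ m != N.-1 by split; apply/eqP; lia.
  by rewrite X_at ?(negbTE m_neq0) ?(negbTE m_neqn) ?mulr0 ?addr0 //; lia.
have := expsum_window_eq0 window_eq0.
rewrite subnK ?(ltnW D_lt) // X_at; last by lia.
rewrite gtn_eqF ?eqxx ?add0r ?mulr1; last by lia.
by move/eqP; rewrite expf_eq0 (negbTE z_neq0) andbF.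
Qed.

End Qubits.

Theorem mainTheorem11 (C : numClosedFieldType) (N : nat) (z : C) :
  (4 <= N)%N -> z != 0 ->
  X_state N z = (N.-1%:R)^-1 *: \sum_(k < N.-1) tpow N (x_vec N z k)
  /\ optimal_bond_dim (X_state N z) N.-1.
Proof.
move=> N_ge4 z_neq0; have N_gt2 : (2 < N)%N := ltnW N_ge4.
split; first exact: X_state_tpow_sum.
split=> [|| D _].
- by lia.
- exact: X_state_sum_of_tpows.
- by apply: X_state_sum_of_tpows_ge; rewrite // (ltnW (ltnW N_gt2)).
Qed.
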